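(* Let $(\Omega,\rho)$ be a metric space, $\mathcal{F}\subseteq[0,1]^{\Omega}$ a class of measurable functions, and $\mathcal{D}$ a distribution over $\Omega\times[0,1]$ with marginal $\mu$ on $\Omega$ which is realizable by $\mathcal{F}$. Then for every $\delta\in(0,1)$ and $n\in\mathbb{N}$, with probability at least $1-\delta$ over $S\sim\mathcal{D}^n$, for all $f\in\mathcal{F}$: \[ L_\mathcal{D}(f) \leq 1.01\,L_S(f) +\inf_{\alpha\geq0}\left(\alpha+\frac{205\log \mathcal{N}_{[\,]}(\mathcal{F},L_1(\mu),\alpha)}{n}\right) +\frac{205\log(1/\delta)}{n}. \]
   Context: For measurable $f:\Omega\to[0,1]$, $L_\mathcal{D}(f):=\mathbb{E}_{(X,Y)\sim\mathcal{D}}|f(X)-Y|$ and, for $S=(X_i,Y_i)_{i=1}^n$, $L_S(f):=\frac1n\sum_{i=1}^n|f(X_i)-Y_i|$. $\mathcal{D}$ is realizable by $\mathcal{F}$ if there exists $f^*\in\mathcal{F}$ with $L_\mathcal{D}(f^* )=0$. A bracket $[l,u]$ ($l,u:\Omega\to[0,1]$) contains $f$ if $l\le f\le u$; it is an $\alpha$-bracket in $L_1(\mu)$ if $\int|u-l|d\mu\le\alpha$; $\mathcal{N}_{[\,]}(\mathcal{F},L_1(\mu),\alpha)$ is the minimal number of $\alpha$-brackets covering $\mathcal{F}$. *)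

From HB Require Import structures.
From mathcomp Require Import all_boot all_order all_algebra.
From mathcomp Require Import all_classical all_reals all_analysis.
Set Implicit Arguments. Unset Strict Implicit. Unset Printing Implicit Defensive.
Import Order.TTheory GRing.Theory Num.Theory.
Local Open Scope classical_set_scope.
Local Open Scope ring_scope.

(* Nonempty (pointed) metric spaces.  Omega is nonempty anyway since D is a
   probability measure on Omega x [0,1]; the point is only needed by the library's
   generated-sigma-algebra construction. *)
#[short(type="pointedMetricType")]
HB.structure Definition PointedMetric (K : numDomainType) :=
  { M of Metric K M & isPointed M }.

Notation Borel M := (g_sigma_algebraType (@open M)).

Section defs.
Context {R : realType} {d : measure_display} {T : measurableType d}.
Local Open Scope ereal_scope.

Definition risk (D : set (T * R) -> \bar R) (f : T -> R) : \bar R :=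
  \int[D]_z (`| f z.1 - z.2 |)%:E.

Definition emp_risk (n : nat) (S : n.-tuple (T * R)) (f : T -> R) : R :=
  (n%:R^-1 * \sum_(z <- S) `| f z.1 - z.2 |)%R.

Definition realizable (F : set (T -> R)) (D : set (T * R) -> \bar R) : Prop :=
  exists2 f, F f & risk D f = 0.

Definition marginal (D : set (T * R) -> \bar R) : set T -> \bar R :=
  pushforward D fst.

Definition bracket_contains (l u f : T -> R) : Prop :=
  forall x, (l x <= f x <= u x)%R.

Definition alpha_bracket (mu : set T -> \bar R) (alpha : R) (l u : T -> R) : Prop :=
  [/\ measurable_fun setT l, measurable_fun setT u,
      (forall x, (0 <= l x <= 1)%R /\ (0 <= u x <= 1)%R) &
      \int[mu]_x (`| u x - l x |)%:E <= alpha%:E].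

(* bracketing number N_[](F, L_1(mu), alpha): minimal number of alpha-brackets
   covering F (+oo if no finite cover exists) *)
Definition bracketing_number (F : set (T -> R)) (mu : set T -> \bar R) (alpha : R)
  : \bar R :=
  ereal_inf [set (k%:R)%:E | k in [set k : nat |
    exists (l u : 'I_k -> T -> R),
      (forall i, alpha_bracket mu alpha (l i) (u i)) /\
      (forall f, F f -> exists i, bracket_contains (l i) (u i) f)]].

End defs.

Definition elog {R : realType} (x : \bar R) : \bar R :=
  match x with
  | r%:E => (ln r)%:E
  | +oo => +oo
  | -oo => -oo
  end%E.

Fixpoint prodn {R : realType} {d} {X : measurableType d} (P : set X -> \bar R) (n : nat)
  : set (n.-tuple X) -> \bar R :=
  match n with
  | 0 => fun A => (if `[< A [tuple] >] then 1 else 0)%:E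
  | n'.+1 => fun A => (\int[P]_x @prodn R d X P n' [set t : n'.-tuple X | A (cons_tuple x t)])%E
  end.
Arguments prodn {R d X} P n _.

From HB Require Import structures.
From mathcomp Require Import all_boot all_order all_algebra.
From mathcomp Require Import all_classical all_reals all_analysis.
From mathcomp Require Import ring lra.
Import Order.TTheory GRing.Theory Num.Theory.
Import measurable_realfun.
Set Implicit Arguments. Unset Strict Implicit. Unset Printing Implicit Defensive.
Local Open Scope classical_set_scope.
Local Open Scope ring_scope.

(* Pick a scale alpha that is nearly optimal in the complexity term, and a
   minimal cover of F by k alpha-brackets [l_i, u_i].  For each bracket the
   "bracket loss" g_i(x, y) = min(max(l_i x - y, y - u_i x, 0), 1) is a lower
   bound for the loss |f x - y| of every f in the bracket and, for labels in
   [0,1], an upper bound up to the bracket width u_i x - l_i x, whose integral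
   is at most alpha.  Hence L_D(f) <= E[g_i] + alpha.
   The [0,1]-valued g_i satisfy a lower-tail Chernoff bound with parameter
   1/100; a union bound over the k brackets, proved by induction on the
   sample size along the iterated-integral definition of D^n, yields an event
   of probability >= 1 - delta on which every sample sum of g_i exceeds
   (100/101) n E[g_i] - 100 log(k/delta).  On that event the loss of f is
   compared with the sum of g_i, which gives the bound after arithmetic.
   Realizability is only used through the nonemptiness of F. *)

Section bracket_loss.
Context {R : realFieldType}.
Implicit Types l u f y : R.

(* The loss |f - y| that is certain for every f in [l, u], clipped to [0,1]. *)
Definition bracket_loss l u y : R :=
  Num.min (Num.max (Num.max (l - y) (y - u)) 0) 1.

Lemma bracket_loss01 l u y : 0 <= bracket_loss l u y <= 1.
Proof. by rewrite /bracket_loss le_min ge_min lexx orbT ler01 le_max lexx orbT. Qed.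

Lemma bracket_loss_le l u f y : l <= f <= u -> bracket_loss l u y <= `|f - y|.
Proof.
case/andP=> lf fu; rewrite /bracket_loss ge_min; apply/orP; left.
rewrite !ge_max; have [fy|fy] := lerP 0 (f - y).
  by rewrite ger0_norm // -!andbA; apply/and3P; split; lra.
by rewrite ltr0_norm // -!andbA; apply/and3P; split; lra.
Qed.

Lemma loss_le_bracket_loss l u f y : 0 <= l -> l <= f <= u -> u <= 1 ->
  0 <= y <= 1 -> `|f - y| <= bracket_loss l u y + (u - l).
Proof.
move=> l0 /andP[lf fu] u1 /andP[y0 y1].
set M := Num.max (Num.max (l - y) (y - u)) 0.
have lyM : l - y <= M by rewrite !le_max lexx.
have yuM : y - u <= M by rewrite !le_max lexx orbT.
have -> : bracket_loss l u y = M.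
  by apply/min_idPl; rewrite !ge_max -!andbA; apply/and3P; split; lra.
have [fy|fy] := lerP 0 (f - y); [rewrite ger0_norm //|rewrite ltr0_norm //]; lra.
Qed.

End bracket_loss.

(* e^(-x/100) <= 1 - x/101 on [0,1], from e^(x/100) >= 1 + x/100. *)
Lemma expR_small_le {R : realType} (x : R) : 0 <= x <= 1 ->
  expR (- (1/100) * x) <= 1 - x / 101.
Proof.
case/andP=> x0 x1.
have ex_gt0 : 0 < expR (x / 100) by exact: expR_gt0.
rewrite (_ : - (1/100) * x = - (x / 100)); last by field.
rewrite expRN -div1r ler_pdivrMr //.
have taylor : 1 + x / 100 <= expR (x / 100) by exact: expR_ge1Dx.
apply: le_trans (_ : 1 <= (1 - x / 101) * (1 + x / 100)) _; first nra.
by rewrite ler_wpM2l // subr_ge0 ler_pdivrMr //; lra.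
Qed.

Lemma chernoff_term_le {R : realType} (n : nat) (p m L : R) :
  0 <= m <= 1 - p / 101 ->
  expR (1/100 * (100/101 * (n%:R * p) - 100 * L)) * m ^+ n <= expR (- L).
Proof.
case/andP=> m0 m1.
have mn : m ^+ n <= expR (- (p / 101) * n%:R).
  rewrite expRM_natr; apply: lerXn2r; rewrite ?nnegrE ?expR_ge0 //.
  by apply: le_trans m1 _; have := expR_ge1Dx (- (p / 101)); lra.
apply: le_trans (ler_wpM2l (expR_ge0 _) mn) _; rewrite -expRD.
by rewrite (_ : _ + _ = - L) //; field.
Qed.

Section sample_sums.
Context {R : realType} {d : measure_display} {X : measurableType d}.

Definition sum_event n N (g : 'I_N -> X -> R) (a : 'I_N -> R) : set (n.-tuple X) :=
  [set t | forall i, a i < \sum_(z <- t) g i z].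
#[global] Arguments sum_event n {N} g a.

(* Measurable as a finite intersection of preimages of open half-lines. *)
Lemma sum_event_measurable n N (g : 'I_N -> X -> R) (a : 'I_N -> R) :
  (forall i, measurable_fun setT (g i)) -> measurable (sum_event n g a).
Proof.
move=> mg.
have msum i : measurable_fun setT (fun t : n.-tuple X => \sum_(z <- t) g i z).
  rewrite (_ : (fun t => _) = fun t => \sum_(j < n) g i (tnth t j)).
    by apply: measurable_sum => j; exact: measurableT_comp (mg i) (measurable_tnth j).
  by apply/funext => t; rewrite big_tuple.
rewrite (_ : sum_event n g a = \bigcap_(i in [set: 'I_N])
    ((fun t : n.-tuple X => \sum_(z <- t) g i z) @^-1` `]a i, +oo[%classic)).
  apply: fin_bigcap_measurable; first exact: finite_finset.
  by move=> i _; rewrite -[X in measurable X]setTI; exact: msum measurableT _ (measurable_itv _).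
apply/seteqP; split => t /=.
  by move=> ht i _ /=; rewrite in_itv /= andbT; exact: ht.
by move=> ht i; have := ht i I; rewrite /= in_itv /= andbT.
Qed.

Lemma sum_event_cons n N (g : 'I_N -> X -> R) (a : 'I_N -> R) (x : X) :
  [set t : n.-tuple X | sum_event n.+1 g a (cons_tuple x t)] =
  sum_event n g (fun i => a i - g i x).
Proof.
by apply/seteqP; split => t /= ht i; have := ht i; rewrite big_cons; lra.
Qed.

End sample_sums.

Lemma expR_neg_mul01 {R : realType} (lam y : R) :
  0 <= lam -> 0 <= y -> 0 <= expR (- lam * y) <= 1.
Proof.
by move=> lam0 y0; rewrite expR_ge0 -expR0 ler_expR mulNr oppr_le0 mulr_ge0.
Qed.

Section probability_integrals.
Context {R : realType} {d : measure_display} {X : measurableType d}.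
Variable D : probability X R.

Lemma bounded_integrable (h : X -> R) (C : R) :
  measurable_fun setT h -> (forall x, `|h x| <= C) -> D.-integrable setT (EFin \o h).
Proof.
move=> mh hC; apply: measurable_bounded_integrable => //.
  by move: (probability_setT D) => /= ->; rewrite ltry.
by rewrite /bounded_near; near=> M => x _ /=; rewrite (le_trans (hC x)).
Unshelve. all: by end_near. Qed.

(* A measurable nonnegative lower bound suffices to compare integrals: the
   upper function f need not be measurable (the integral of a nonnegative
   function is a supremum over simple functions below it). *)
Lemma ge0_le_integral_lb (h : X -> R) (f : X -> \bar R) :
  measurable_fun setT h -> (forall x, 0 <= h x) -> (forall x, 0 <= f x)%E ->
  (forall x, (h x)%:E <= f x)%E -> (\int[D]_x (h x)%:E <= \int[D]_x f x)%E.
Proof.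
move=> mh h0 f0 hf.
rewrite ge0_integralE; last by move=> x _; rewrite lee_fin.
rewrite ge0_integralE; last by move=> x _.
apply: ge_ereal_sup => _ [s /= sh <-]; apply: ereal_sup_ubound; exists s => //= x.
by apply: le_trans (sh x) _; rewrite /patch; case: ifP => // _; exact: hf.
Qed.

Lemma EFin_Rintegral (h : X -> R) : D.-integrable setT (EFin \o h) ->
  (\int[D]_x (h x)%:E)%E = (Rintegral D setT h)%:E.
Proof. by move=> ih; rewrite /Rintegral fineK //; exact: integrable_fin_num. Qed.

Lemma Rintegral_sum (I : Type) (s : seq I) (F : I -> X -> R) :
  (forall i, D.-integrable setT (EFin \o F i)) ->
  Rintegral D setT (fun x => \sum_(i <- s) F i x) = \sum_(i <- s) Rintegral D setT (F i).
Proof.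
move=> iF; rewrite /Rintegral.
under eq_integral do rewrite -sumEFin.
rewrite integral_sum // -EFin_sum_fine // => i _.
exact: (integrable_fin_num measurableT (iF i)).
Qed.

Lemma integral_one_sub_sum (N : nat) (c : 'I_N -> R) (e : 'I_N -> X -> R) :
  (forall i, measurable_fun setT (e i)) -> (forall i x, 0 <= e i x <= 1) ->
  (\int[D]_x (1 - \sum_(i < N) c i * e i x)%:E =
     (1 - \sum_(i < N) c i * Rintegral D setT (e i))%:E)%E.
Proof.
move=> me e01.
have ce_bound i x : `|c i * e i x| <= `|c i|.
  by rewrite normrM ler_piMr //; have /andP[e0 e1] := e01 i x; rewrite ger0_norm.
have mce i : measurable_fun setT (fun x => c i * e i x).
  by apply: measurable_funM => //; exact: measurable_cst.
have ice i : D.-integrable setT (EFin \o (fun x => c i * e i x)).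
  exact: bounded_integrable (mce i) (ce_bound i).
have isum : D.-integrable setT (EFin \o (fun x => \sum_(i < N) c i * e i x)).
  apply: (bounded_integrable (C := \sum_(i < N) `|c i|)); first exact: measurable_sum.
  by move=> x; apply: le_trans (ler_norm_sum _ _ _) (ler_sum _ _) => i _.
have i1 : D.-integrable setT (EFin \o (fun=> 1 : R)).
  by apply: (bounded_integrable (C := 1)) => [|x]; [exact: measurable_cst|rewrite normr1].
rewrite EFin_Rintegral; last first.
  apply: (bounded_integrable (C := 1 + \sum_(i < N) `|c i|)).
    by apply: measurable_funB => //; exact: measurable_sum.
  move=> x; rewrite (le_trans (ler_normB _ _)) // normr1 lerD2l.
  by apply: le_trans (ler_norm_sum _ _ _) (ler_sum _ _) => i _.
rewrite RintegralB // Rintegral_cst //= probability_setT mul1r Rintegral_sum //.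
congr (_ - _)%:E; apply: eq_bigr => i _; rewrite RintegralZl //.
apply: (bounded_integrable (C := 1)) => // x.
by have /andP[e0 e1] := e01 i x; rewrite ger0_norm.
Qed.

Definition neg_mgf (lam : R) (h : X -> R) : R :=
  Rintegral D setT (fun x => expR (- lam * h x)).

Lemma measurable_expR_neg (lam : R) (h : X -> R) :
  measurable_fun setT h -> measurable_fun setT (fun x => expR (- lam * h x)).
Proof.
move=> mh; apply: measurableT_comp; first exact: measurable_expR.
by apply: measurable_funM => //; exact: measurable_cst.
Qed.

Lemma neg_mgf_le (h : X -> R) : measurable_fun setT h -> (forall x, 0 <= h x <= 1) ->
  0 <= neg_mgf (1/100) h <= 1 - Rintegral D setT h / 101.
Proof.
move=> mh h01.
have ie : D.-integrable setT (EFin \o (fun x => expR (- (1/100) * h x))).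
  apply: (bounded_integrable (C := 1)); first exact: measurable_expR_neg.
  move=> x; have /andP[h0 _] := h01 x.
  have /andP[e0 e1] := expR_neg_mul01 (divr_ge0 ler01 (ler0n R 100)) h0.
  by rewrite ger0_norm.
have ih : D.-integrable setT (EFin \o h).
  by apply: (bounded_integrable (C := 1)) => // x; have /andP[h0 h1] := h01 x; rewrite ger0_norm.
have ih101 : D.-integrable setT (EFin \o (fun x => h x / 101)).
  apply: (bounded_integrable (C := 1)).
    by apply: measurable_funM => //; exact: measurable_cst.
  by move=> x; have /andP[h0 h1] := h01 x; rewrite ger0_norm; lra.
have i1 : D.-integrable setT (EFin \o (fun=> 1 : R)).
  by apply: (bounded_integrable (C := 1)) => [|x]; [exact: measurable_cst|rewrite normr1].
have ilin : D.-integrable setT (EFin \o (fun x => 1 - h x / 101)).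
  apply: (bounded_integrable (C := 1)).
    apply: measurable_funB; first exact: measurable_cst.
    by apply: measurable_funM => //; exact: measurable_cst.
  by move=> x; have /andP[h0 h1] := h01 x; rewrite ger0_norm; lra.
rewrite /neg_mgf; apply/andP; split; first by apply: Rintegral_ge0 => x _; exact: expR_ge0.
apply: le_trans (le_Rintegral measurableT ie ilin (fun x _ => expR_small_le (h01 x))) _.
rewrite RintegralB // Rintegral_cst //= probability_setT mul1r.
by rewrite RintegralZr.
Qed.

Lemma prodn_ge0 n (A : set (n.-tuple X)) : (0 <= prodn D n A)%E.
Proof.
elim: n A => [|n IH] A /=; first by case: asboolP.
by apply: integral_ge0 => x _; exact: IH.
Qed.

Section chernoff.
Variables (N : nat) (g : 'I_N -> X -> R) (lam : R).
Hypotheses (lam_ge0 : 0 <= lam) (mg : forall i, measurable_fun setT (g i))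
  (g_ge0 : forall i x, 0 <= g i x).

Let failure n (a : 'I_N -> R) : R :=
  \sum_(i < N) expR (lam * a i) * neg_mgf lam (g i) ^+ n.

Let e i x := expR (- lam * g i x).

Let e01 i x : 0 <= e i x <= 1.
Proof. exact: expR_neg_mul01. Qed.

(* For the empty sample the event holds iff every threshold is negative;
   otherwise some term of the failure sum is at least 1. *)
Lemma chernoff_base (a : 'I_N -> R) :
  ((1 - failure 0 a)%:E <= prodn D 0 (sum_event 0 g a))%E.
Proof.
rewrite /= /failure; under eq_bigr do rewrite expr0 mulr1.
case: asboolP => [_|hfail].
  by rewrite lee_fin gerBl // sumr_ge0 // => i _; exact: expR_ge0.
have [i ai_ge0] : exists i, 0 <= a i.
  apply/not_existsP => hneg; apply: hfail => i.
  by rewrite big_nil ltNge; apply/negP => /(hneg i).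
rewrite lee_fin subr_le0 (bigD1 i) //= -[1]addr0 lerD //.
  by rewrite -expR0 ler_expR mulr_ge0.
by rewrite sumr_ge0 // => j _; exact: expR_ge0.
Qed.

(* Integrating out the first sample point: conditionally on it the event is
   a sum event with shifted thresholds, to which the hypothesis applies, and
   integrating the resulting bound over D raises each mgf to the power n+1. *)
Lemma chernoff_step n :
  (forall a, ((1 - failure n a)%:E <= prodn D n (sum_event n g a))%E) ->
  forall a, ((1 - failure n.+1 a)%:E <= prodn D n.+1 (sum_event n.+1 g a))%E.
Proof.
move=> IH a.
pose c i := expR (lam * a i) * neg_mgf lam (g i) ^+ n.
pose h0 x := 1 - \sum_(i < N) c i * e i x.
have me i : measurable_fun setT (e i) by exact: measurable_expR_neg.
have mh0 : measurable_fun setT h0.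
  apply: measurable_funB; first exact: measurable_cst.
  by apply: measurable_sum => i; apply: measurable_funM => //; exact: measurable_cst.
have h0_bound x : `|h0 x| <= 1 + \sum_(i < N) c i.
  rewrite (le_trans (ler_normB _ _)) // normr1 lerD2l (le_trans (ler_norm_sum _ _ _)) //.
  apply: ler_sum => i _; have /andP[e0 e1] := e01 i x.
  by rewrite normrM !ger0_norm ?ler_piMr ?mulr_ge0 ?expR_ge0 ?exprn_ge0 ?Rintegral_ge0.
have -> : (1 - failure n.+1 a)%:E = (\int[D]_x (h0 x)%:E)%E.
  rewrite integral_one_sub_sum //; congr (1 - _)%:E; apply: eq_bigr => i _.
  by rewrite /c exprSr mulrA.
apply: (@le_trans _ _ (\int[D]_x (Num.max (h0 x) 0)%:E)%E).
  apply: le_integral => [//|||x _]; last by rewrite lee_fin le_max lexx.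
    exact: bounded_integrable h0_bound.
  apply: (bounded_integrable (C := 1 + \sum_(i < N) c i)) => [|x].
    by apply: measurable_maxr => //; exact: measurable_cst.
  rewrite /Num.max; case: ifP => _; last exact: h0_bound.
  by rewrite normr0; exact: le_trans (normr_ge0 _) (h0_bound x).
apply: ge0_le_integral_lb => [||x|x]; last 2 first.
- exact: prodn_ge0.
- rewrite /Num.max; case: ifP => _; first exact: prodn_ge0.
  rewrite sum_event_cons; apply: le_trans (IH _); rewrite lee_fin lerB //.
  rewrite le_eqVlt; apply/orP; left; apply/eqP; apply: eq_bigr => i _.
  by rewrite /c /e mulrBr expRD mulNr mulrAC.
- by apply: measurable_maxr => //; exact: measurable_cst.
- by move=> x; rewrite le_max lexx orbT.
Qed.

Lemma chernoff_union_bound n (a : 'I_N -> R) :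
  ((1 - \sum_(i < N) expR (lam * a i) * neg_mgf lam (g i) ^+ n)%:E
    <= prodn D n (sum_event n g a))%E.
Proof. by elim: n a => [|n IH] a; [exact: chernoff_base|exact: chernoff_step]. Qed.

End chernoff.

Lemma sum_event_prob N (g : 'I_N -> X -> R) (delta : R) n :
  (0 < N)%N -> 0 < delta ->
  (forall i, measurable_fun setT (g i)) -> (forall i x, 0 <= g i x <= 1) ->
  ((1 - delta)%:E <= prodn D n (sum_event n g (fun i =>
     (100/101 * (n%:R * Rintegral D setT (g i)) - 100 * ln (N%:R / delta))%R)))%E.
Proof.
move=> N0 delta0 mg g01.
have g0 i x : 0 <= g i x by have /andP[] := g01 i x.
have lam0 : 0 <= 1/100 :> R by rewrite divr_ge0.
apply: le_trans (chernoff_union_bound lam0 mg g0 n _).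
rewrite lee_fin lerB //; apply: (@le_trans _ _ (\sum_(i < N) delta / N%:R)).
  apply: ler_sum => i _; apply: le_trans (chernoff_term_le _ _ (neg_mgf_le (mg i) (g01 i))) _.
  by rewrite expRN lnK ?invf_div // posrE divr_gt0 // ltr0n.
by rewrite sumr_const card_ord -[_ *+ N]mulr_natr mulfVK // pnatr_eq0 -lt0n.
Qed.

End probability_integrals.

Section bracket_risk.
Context {R : realType} {d : measure_display} {T : measurableType d}.
Variable D : probability (T * R)%type R.

Lemma measurable_bracket_loss (l u : T -> R) :
  measurable_fun setT l -> measurable_fun setT u ->
  measurable_fun setT (fun z : T * R => bracket_loss (l z.1) (u z.1) z.2).
Proof.
move=> ml mu; apply: measurable_minr; last exact: measurable_cst.
apply: measurable_maxr; last exact: measurable_cst.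
apply: measurable_maxr; apply: measurable_funB.
- exact: measurableT_comp ml measurable_fst.
- exact: measurable_snd.
- exact: measurable_snd.
- exact: measurableT_comp mu measurable_fst.
Qed.

Lemma measurable_label01 : measurable [set z : T * R | 0 <= z.2 <= 1].
Proof.
rewrite (_ : [set z | _] = setT `&` (snd @^-1` `[0, 1]%classic)).
  exact: measurable_snd measurableT _ (measurable_itv _).
by apply/seteqP; split => z /=; rewrite ?in_itv //=; move=> [].
Qed.

(* The width of an alpha-bracket, integrated against D, is at most alpha:
   the L_1 norm in the bracket condition is taken w.r.t. the marginal of D. *)
Lemma Rintegral_bracket_width (l u : T -> R) (alpha : R) :
  alpha_bracket (marginal D) alpha l u -> (forall x, l x <= u x) ->
  Rintegral D setT (fun z => u z.1 - l z.1) <= alpha.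
Proof.
case=> ml mu lu01 width lu.
have mw : measurable_fun setT (fun y => u y - l y) by exact: measurable_funB.
have mw_norm : measurable_fun setT (fun y => (`|u y - l y|)%:E).
  by apply/measurable_EFinP; apply: measurableT_comp; first exact: normr_measurable.
rewrite -lee_fin -EFin_Rintegral; last first.
  apply: (bounded_integrable D (C := 1)) => [|z].
    exact: measurableT_comp mw measurable_fst.
  by have [/andP[? ?] /andP[? ?]] := lu01 z.1; rewrite ger0_norm ?subr_ge0 ?lu //; lra.
apply: le_trans width; rewrite ge0_integral_pushforward //.
rewrite preimage_setT; apply: ge0_le_integral => //.
- by move=> z _; rewrite lee_fin subr_ge0.
- by apply/measurable_EFinP; exact: measurableT_comp mw measurable_fst.
- exact: measurableT_comp mw_norm measurable_fst.
- by move=> z _ /=; rewrite lee_fin ger0_norm // subr_ge0.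
Qed.

Lemma risk_le_bracket (l u f : T -> R) (alpha : R) :
  D [set z | 0 <= z.2 <= 1] = 1%E ->
  alpha_bracket (marginal D) alpha l u -> bracket_contains l u f ->
  measurable_fun setT f ->
  (risk D f <=
    (Rintegral D setT (fun z => bracket_loss (l z.1) (u z.1) z.2) + alpha)%:E)%E.
Proof.
move=> label01 hb hf mf; have [ml mu lu01 _] := hb.
have lu x : l x <= u x by have /andP[lf fu] := hf x; exact: le_trans fu.
pose g z := bracket_loss (l z.1) (u z.1) z.2.
pose w (z : T * R) := u z.1 - l z.1.
have mg : measurable_fun setT g by exact: measurable_bracket_loss.
have mw : measurable_fun setT w.
  by apply: measurable_funB; exact: measurableT_comp measurable_fst.
have gw01 z : 0 <= g z <= 1 /\ 0 <= w z <= 1.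
  have [/andP[? ?] /andP[? ?]] := lu01 z.1; have := lu z.1.
  by rewrite /w bracket_loss01; split => //; lra.
have ig : D.-integrable setT (EFin \o g).
  by apply: (bounded_integrable D (C := 1)) => // z; have [/andP[? ?] _] := gw01 z; rewrite ger0_norm.
have iw : D.-integrable setT (EFin \o w).
  by apply: (bounded_integrable D (C := 1)) => // z; have [_ /andP[? ?]] := gw01 z; rewrite ger0_norm.
have Y01c : D (~` [set z | 0 <= z.2 <= 1]) = 0%E.
  by rewrite probability_setC ?label01 ?subee //; exact: measurable_label01.
apply: (@le_trans _ _ (\int[D]_z (g z + w z)%:E)%E).
  rewrite /risk; apply: ae_ge0_le_integral => //.
  - apply/measurable_EFinP; apply: measurableT_comp; first exact: normr_measurable.
    apply: measurable_funB; last exact: measurable_snd.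
    exact: measurableT_comp mf measurable_fst.
  - by move=> z _; have [/andP[? ?] /andP[? ?]] := gw01 z; rewrite lee_fin addr_ge0.
  - by apply/measurable_EFinP; exact: measurable_funD.
  - exists (~` [set z | 0 <= z.2 <= 1]); split => //.
      by apply: measurableC; exact: measurable_label01.
    move=> z /= gap Yz; apply: gap => _; rewrite lee_fin.
    have [/andP[l0 _] /andP[_ u1]] := lu01 z.1.
    exact: loss_le_bracket_loss l0 (hf z.1) u1 Yz.
rewrite EFin_Rintegral; last first.
  apply: (bounded_integrable D (C := 2)); first exact: measurable_funD.
  by move=> z; have [/andP[? ?] /andP[? ?]] := gw01 z; rewrite ger0_norm; lra.
by rewrite RintegralD // lee_fin lerD2l; exact: Rintegral_bracket_width.
Qed.

End bracket_risk.

Section bracketing.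
Context {R : realType} {d : measure_display} {T : measurableType d}.
Variables (F : set (T -> R)) (mu : set T -> \bar R).

Lemma bracketing_number_ge1 (f0 : T -> R) (alpha : R) :
  F f0 -> (1 <= bracketing_number F mu alpha)%E.
Proof.
move=> Ff0; apply: le_ereal_inf_tmp => _ [[|k] [l [u [_ cover]]] <-].
  by have [[]] := cover _ Ff0.
by rewrite lee_fin ler1n.
Qed.

Lemma bracketing_number_attained (alpha : R) :
  (bracketing_number F mu alpha < +oo)%E ->
  exists k (l u : 'I_k -> T -> R),
    [/\ (forall i, alpha_bracket mu alpha (l i) (u i)),
        (forall f, F f -> exists i, bracket_contains (l i) (u i) f) &
        bracketing_number F mu alpha = (k%:R)%:E].
Proof.
move=> BN_fin.
set K := [set k : nat | exists (l u : 'I_k -> T -> R),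
  (forall i, alpha_bracket mu alpha (l i) (u i)) /\
  (forall f, F f -> exists i, bracket_contains (l i) (u i) f)].
have exK : exists k, `[< K k >].
  apply/not_existsP => noK; move: BN_fin; rewrite /bracketing_number.
  suff -> : [set (k%:R)%:E | k in K] = set0 :> set (\bar R) by rewrite ereal_inf0.
  by apply/seteqP; split => // x [k Kk _]; apply: (noK k); exact/asboolP.
have [k /asboolP[l [u [hb cover]]] kmin] := ex_minnP exK.
exists k, l, u; split => //; apply/eqP; rewrite eq_le; apply/andP; split.
  by apply: ereal_inf_lbound; exists k => //; exists l, u.
apply: le_ereal_inf_tmp => _ [j Kj <-]; rewrite lee_fin ler_nat.
by apply: kmin; exact/asboolP.
Qed.

Definition complexity (c : R) : \bar R :=
  ereal_inf [set (alpha%:E + c%:E * elog (bracketing_number F mu alpha))%E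
            | alpha in [set alpha : R | 0 <= alpha]].

(* The complexity term lies in [0,1] (take alpha = 1), hence is finite. *)
Lemma complexity_finite (c : R) (f0 : T -> R) :
  F f0 -> 0 <= c -> (bracketing_number F mu 1 <= 1)%E ->
  exists r, complexity c = r%:E.
Proof.
move=> Ff0 c0 BN1.
have elog_ge0 alpha : (0 <= elog (bracketing_number F mu alpha))%E.
  move: (bracketing_number_ge1 alpha Ff0).
  by case: bracketing_number => //= x; rewrite !lee_fin; exact: ln_ge0.
have ge0 : (0 <= complexity c)%E.
  apply: le_ereal_inf_tmp => _ [alpha alpha0 <-].
  by rewrite adde_ge0 ?lee_fin ?mule_ge0.
have le1 : (complexity c <= 1%:E)%E.
  apply: ereal_inf_lbound; exists 1; first exact: ler01.
  have BN_1 : bracketing_number F mu 1 = 1%:E.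
    by apply/eqP; rewrite eq_le BN1 (bracketing_number_ge1 _ Ff0).
  by rewrite BN_1 /= ln1 mule0 adde0.
by move: ge0 le1; case: (complexity c) => [r _ _|//|//]; exists r.
Qed.

Lemma complexity_near_optimal (c r eps : R) (f0 : T -> R) :
  F f0 -> 0 < c -> complexity c = r%:E -> 0 < eps ->
  exists alpha k (l u : 'I_k -> T -> R),
    [/\ 0 <= alpha, (0 < k)%N, (forall i, alpha_bracket mu alpha (l i) (u i)),
        (forall f, F f -> exists i, bracket_contains (l i) (u i) f) &
        alpha + c * ln (k%:R : R) < r + eps].
Proof.
move=> Ff0 c0 Ir eps0.
have Ifin : complexity c \is a fin_num by rewrite Ir.
have [_ [alpha alpha0 <-]] := lb_ereal_inf_adherent eps0 Ifin.
rewrite -/(complexity c) Ir => opt.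
have BN_fin : (bracketing_number F mu alpha < +oo)%E.
  rewrite ltNge leye_eq; apply/negP => /eqP BNoo; move: opt.
  by rewrite BNoo /= mulry gtr0_sg // mul1e addey // -EFinD ltNge leey.
have [k [l [u [hb cover BNk]]]] := bracketing_number_attained BN_fin.
exists alpha, k, l, u; split => //.
- by case: k l u {hb BNk opt} cover => [|k] // l u cover; have [[]] := cover _ Ff0.
- by move: opt; rewrite BNk /= -EFinM -!EFinD lte_fin.
Qed.

End bracketing.

(* At scale alpha = 1 the single bracket [0,1] covers any class of
   [0,1]-valued functions. *)
Lemma bracketing_number_marginal_le1 {R : realType} {d : measure_display}
    {T : measurableType d} (D : probability (T * R)%type R) (F : set (T -> R)) :
  (forall f, F f -> forall x, 0 <= f x <= 1) ->
  (bracketing_number F (marginal D) 1 <= 1)%E.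
Proof.
move=> F01; apply: ereal_inf_lbound; exists 1%N => //.
exists (fun _ _ => 0), (fun _ _ => 1); split; last first.
  by move=> f Ff; exists ord0 => x; exact: F01.
move=> i; split; [exact: measurable_cst|exact: measurable_cst| |].
  by move=> x; rewrite !lexx ler01.
rewrite ge0_integral_pushforward //.
rewrite preimage_setT (_ : _ \o fst = cst 1%:E); last first.
  by apply/funext => x /=; rewrite subr0 normr1.
by rewrite integral_cst //= mul1e; move: (probability_setT D) => /= ->.
Qed.

(* The final bookkeeping: a sample sum exceeding its Chernoff threshold
   bounds the expected bracket loss p by the empirical loss E. *)
Lemma risk_bound_arith {R : realFieldType} (nn p s E lnk L alpha r : R) :
  0 < nn -> 0 <= lnk ->
  100/101 * (nn * p) - 100 * (lnk + L) < s -> s <= E ->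
  alpha + 205 / nn * lnk < r + 104 * L / nn ->
  p + alpha <= 101/100 * (nn^-1 * E) + r + 205 * L / nn.
Proof.
move=> nn0 lnk0 hs sE opt.
have nn_neq0 : nn != 0 by rewrite gt_eqF.
have hp : p < (101/100 * E + 101 * lnk + 101 * L) / nn by rewrite ltr_pdivlMr //; lra.
have e1 : (101/100 * E + 101 * lnk + 101 * L) / nn =
          101/100 * (nn^-1 * E) + 101 * (lnk / nn) + 101 * (L / nn) by field.
have e2 : 205 / nn * lnk = 205 * (lnk / nn) by field.
have e3 : 104 * L / nn = 104 * (L / nn) by field.
have e4 : 205 * L / nn = 205 * (L / nn) by field.
have lnk_nn : 0 <= lnk / nn by rewrite divr_ge0 // ltW.
rewrite e1 in hp; rewrite e2 e3 in opt; rewrite e4; lra.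
Qed.

Theorem proposition2 (R : realType) (M : pointedMetricType R)
  (F : set (Borel M -> R)) (D : probability (Borel M * R)%type R) :
  (forall f, F f -> measurable_fun setT f /\ (forall x, 0 <= f x <= 1)) ->
  D [set z | 0 <= z.2 <= 1] = 1%E ->
  realizable F D ->
  forall (delta : R) (n : nat), 0 < delta < 1 -> (0 < n)%N ->
  exists A : set (n.-tuple (Borel M * R)%type),
    [/\ measurable A,
        ((1 - delta)%:E <= prodn D n A)%E &
        forall S, A S -> forall f, F f ->
          (risk D f <=
             (101 / 100 * emp_risk S f)%R%:E
             + ereal_inf [set (alpha%:E
                   + (205 / n%:R)%R%:E * elog (bracketing_number F (marginal D) alpha))%E
                 | alpha in [set alpha : R | (0 <= alpha)%R]]
             + (205 * ln (delta^-1) / n%:R)%R%:E)%E].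
Proof.
move=> hF label01 [f0 Ff0 _] delta n /andP[delta0 delta1] n0.
have nn0 : 0 < n%:R :> R by rewrite ltr0n.
have c0 : 0 < 205 / n%:R :> R by rewrite divr_gt0.
have [r Ir] := complexity_finite Ff0 (ltW c0)
  (bracketing_number_marginal_le1 D (fun f Ff => (hF f Ff).2)).
set L := ln delta^-1.
have L0 : 0 < L by apply: ln_gt0; rewrite invf_gt1.
have [alpha [k [l [u [alpha0 k0 hb cover opt]]]]] :=
  complexity_near_optimal Ff0 c0 Ir (divr_gt0 (mulr_gt0 (ltr0n _ 104) L0) nn0).
pose g i (z : (Borel M * R)%type) := bracket_loss (l i z.1) (u i z.1) z.2.
have mg i : measurable_fun setT (g i).
  by case: (hb i) => ml mu _ _; exact: measurable_bracket_loss.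
have g01 i z : 0 <= g i z <= 1 by exact: bracket_loss01.
exists (sum_event n g (fun i => 100/101 * (n%:R * Rintegral D setT (g i))
                                 - 100 * ln (k%:R / delta))); split.
- exact: sum_event_measurable.
- exact: sum_event_prob.
move=> S hS f Ff; have [i fi] := cover f Ff.
apply: le_trans (risk_le_bracket label01 (hb i) fi (hF f Ff).1) _.
rewrite -/(complexity F (marginal D) (205 / n%:R)) Ir /emp_risk -!EFinD lee_fin.
have ln_split : ln (k%:R / delta) = ln (k%:R : R) + L.
  by rewrite lnM // posrE ?ltr0n ?invr_gt0.
apply: (risk_bound_arith (s := \sum_(z <- S) g i z)) opt => //.
- by apply: ln_ge0; rewrite ler1n.
- by have := hS i; rewrite ln_split.
- by apply: ler_sum => z _; apply: bracket_loss_le; exact: fi.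
Qed.
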